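(* Let $(D,\mathrm{left},\mathrm{right})$ be an interval domain and $x\in D$ with $\Uparrow x\neq\emptyset$ in $D$. Then for every $\le$-filtered set $S\subseteq\max(D)$ that has an infimum $\bigwedge S$ in $(\max(D),\le)$: if $\bigwedge S\le\mathrm{left}(x)$, then there exists $s\in S$ with $s\le\mathrm{right}(x)$.
   Context: For a poset $(P,\sqsubseteq)$: directed (resp. filtered) sets are nonempty sets in which any two elements have an upper (resp. lower) bound in the set; $\bigsqcup S$ is the supremum; $x\ll y$ iff for every directed $S\subseteq P$ with a supremum, $y\sqsubseteq\bigsqcup S$ implies $x\sqsubseteq s$ for some $s\in S$; $\Uparrow x=\{a: x\ll a\}$, $\Downarrow x=\{a:a\ll x\}$. $P$ is continuous if there is $B\subseteq P$ such that for each $x$, $B\cap\Downarrow x$ contains a directed set with supremum $x$; a continuous dcpo is a continuous poset in which every directed set has a supremum. $\max(P)$ is the set of maximal elements, $x\sqcap y$ the infimum of $\{x,y\}$. The Scott topology consists of upper sets $U$ such that $\bigsqcup S\in U$ implies $S\cap U\ne\emptyset$ for directed $S$. An interval poset is a poset $D$ with functions $\mathrm{left},\mathrm{right}:D\to\max(D)$ such that (only named infima are assumed to exist): (i) $x=\mathrm{left}(x)\sqcap\mathrm{right}(x)$ for all $x$; (ii) if $\mathrm{right}(x)=\mathrm{left}(y)$ then $\mathrm{left}(x\sqcap y)=\mathrm{left}(x)$ and $\mathrm{right}(x\sqcap y)=\mathrm{right}(y)$; (iii) for $p\in\max(D)$ with $x\sqsubseteq p$: $\mathrm{left}(\mathrm{left}(x)\sqcap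 p)=\mathrm{left}(x)$, $\mathrm{right}(\mathrm{left}(x)\sqcap p)=p$, $\mathrm{left}(p\sqcap\mathrm{right}(x))=p$, $\mathrm{right}(p\sqcap\mathrm{right}(x))=\mathrm{right}(x)$. On $\max(D)$ define $a\le b$ iff $a=\mathrm{left}(z)$, $b=\mathrm{right}(z)$ for some $z\in D$; this is a partial order. For $p,q\in\max(D)$ let $[p,\cdot]=\mathrm{left}^{-1}(p)$ and $[\cdot,q]=\mathrm{right}^{-1}(q)$, regarded as subposets of $D$. An interval domain is an interval poset $(D,\mathrm{left},\mathrm{right})$ such that $D$ is a continuous dcpo and: (i) if $p\in\Uparrow x\cap\max(D)$ then $\Uparrow(\mathrm{left}(x)\sqcap p)\ne\emptyset$ and $\Uparrow(p\sqcap\mathrm{right}(x))\ne\emptyset$; (ii) for all $x\in D$ the following are equivalent: (a) $\Uparrow x\ne\emptyset$; (b) for all $y\in[\mathrm{left}(x),\cdot]$ with $y\sqsubseteq x$, $y\ll\mathrm{right}(y)$ in the poset $[\cdot,\mathrm{right}(y)]$; (c) for all $y\in[\cdot,\mathrm{right}(x)]$ with $y\sqsubseteq x$, $y\ll\mathrm{left}(y)$ in the poset $[\mathrm{left}(y),\cdot]$; (iii)(a) for every directed $S\subseteq[p,\cdot]$, $\mathrm{left}(\bigsqcup S)=p$ and $\mathrm{right}(\bigsqcup S)=\mathrm{right}(\bigsqcup T)$ for every directed $T\subseteq[q,\cdot]$ with $\mathrm{right}(T)=\mathrm{right}(S)$ (images); (iii)(b) for every directed $S\subseteq[\cdot,q]$,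 $\mathrm{right}(\bigsqcup S)=q$ and $\mathrm{left}(\bigsqcup S)=\mathrm{left}(\bigsqcup T)$ for every directed $T\subseteq[\cdot,p]$ with $\mathrm{left}(T)=\mathrm{left}(S)$; (iv) for all $x\in D$, $\{y\in\max(D): x\sqsubseteq y\}$ is compact in the relative Scott topology. *)

From Stdlib Require Import List.
Set Implicit Arguments.

Section Order.
Variable D : Type.
Variable le : D -> D -> Prop.

Definition is_partial_order : Prop :=
  (forall x, le x x) /\
  (forall x y, le x y -> le y x -> x = y) /\
  (forall x y z, le x y -> le y z -> le x z).

Definition subset (A B : D -> Prop) : Prop := forall a, A a -> B a.

Definition is_max (p : D) : Prop := forall y, le p y -> y = p.

Definition directed (S : D -> Prop) : Prop :=
  (exists s, S s) /\
  forall a b, S a -> S b -> exists c, S c /\ le a c /\ le b c.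

Definition filtered (S : D -> Prop) : Prop :=
  (exists s, S s) /\
  forall a b, S a -> S b -> exists c, S c /\ le c a /\ le c b.

(* suprema / infima relative to a subposet P (use P := fun _ => True for D) *)
Definition is_lub_in (P S : D -> Prop) (s : D) : Prop :=
  P s /\ (forall a, S a -> le a s) /\
  (forall u, P u -> (forall a, S a -> le a u) -> le s u).

Definition is_glb_in (P S : D -> Prop) (s : D) : Prop :=
  P s /\ (forall a, S a -> le s a) /\
  (forall u, P u -> (forall a, S a -> le u a) -> le u s).

Definition allD : D -> Prop := fun _ => True.

Definition is_lub (S : D -> Prop) (s : D) : Prop := is_lub_in allD S s.

Definition is_meet (x y z : D) : Prop :=
  is_glb_in allD (fun a => a = x \/ a = y) z.

Definition way_below_in (P : D -> Prop) (x y : D) : Prop :=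
  forall S s, subset S P -> directed S -> is_lub_in P S s -> le y s ->
    exists a, S a /\ le x a.

Definition way_below (x y : D) : Prop := way_below_in allD x y.

Definition uparrow_nonempty (x : D) : Prop := exists a, way_below x a.

Definition continuous_poset : Prop :=
  exists B : D -> Prop, forall x, exists S : D -> Prop,
    subset S (fun a => B a /\ way_below a x) /\ directed S /\ is_lub S x.

Definition dcpo : Prop := forall S, directed S -> exists s, is_lub S s.

Definition continuous_dcpo : Prop := is_partial_order /\ continuous_poset /\ dcpo.

Definition upper_set (U : D -> Prop) : Prop := forall a b, U a -> le a b -> U b.

Definition scott_open (U : D -> Prop) : Prop :=
  upper_set U /\
  forall S s, directed S -> is_lub S s -> U s -> exists a, S a /\ U a.

Definition scott_compact (K : D -> Prop) : Prop :=
  forall F : (D -> Prop) -> Prop,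
    (forall U, F U -> scott_open U) ->
    (forall k, K k -> exists U, F U /\ U k) ->
    exists l : list (D -> Prop),
      (forall U, In U l -> F U) /\
      (forall k, K k -> exists U, In U l /\ U k).

End Order.

Section Interval.
Variable D : Type.
Variable le : D -> D -> Prop.
Variables left right : D -> D.

Definition interval_poset : Prop :=
  is_partial_order le /\
  (forall x, is_max le (left x) /\ is_max le (right x)) /\
  (forall x, is_meet le (left x) (right x) x) /\
  (forall x y, right x = left y ->
     exists z, is_meet le x y z /\ left z = left x /\ right z = right y) /\
  (forall x p, is_max le p -> le x p ->
     (exists z, is_meet le (left x) p z /\ left z = left x /\ right z = p) /\
     (exists z, is_meet le p (right x) z /\ left z = p /\ right z = right x)).

(* the order ≤ on max(D) *)
Definition maxle (a b : D) : Prop := exists z, left z = a /\ right z = b.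

(* [p,·] and [·,q] *)
Definition lsec (p : D) : D -> Prop := fun y => left y = p.
Definition rsec (q : D) : D -> Prop := fun y => right y = q.

Definition interval_domain : Prop :=
  interval_poset /\
  continuous_dcpo le /\
  (forall x p, is_max le p -> way_below le x p ->
     (forall z, is_meet le (left x) p z -> uparrow_nonempty le z) /\
     (forall z, is_meet le p (right x) z -> uparrow_nonempty le z)) /\
  (forall x,
     (uparrow_nonempty le x <->
        (forall y, lsec (left x) y -> le y x ->
           way_below_in le (rsec (right y)) y (right y))) /\
     (uparrow_nonempty le x <->
        (forall y, rsec (right x) y -> le y x ->
           way_below_in le (lsec (left y)) y (left y)))) /\
  (forall p S s, directed le S -> subset S (lsec p) -> is_lub le S s ->
     left s = p /\
     (forall q T t, directed le T -> subset T (lsec q) ->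
        (forall r, (exists a, T a /\ right a = r) <-> (exists a, S a /\ right a = r)) ->
        is_lub le T t -> right s = right t)) /\
  (forall q S s, directed le S -> subset S (rsec q) -> is_lub le S s ->
     right s = q /\
     (forall p T t, directed le T -> subset T (rsec p) ->
        (forall r, (exists a, T a /\ left a = r) <-> (exists a, S a /\ left a = r)) ->
        is_lub le T t -> left s = left t)) /\
  (forall x, scott_compact le (fun y => is_max le y /\ le x y)).

End Interval.

(* Write y for the interval [m, right x] obtained by composing [m, left x] with x,
   so that y ⊑ x.  Because ⇑x is nonempty, axiom (ii)(c) makes y way below m in the
   subposet [m,·].  The intervals [m, s] with s ∈ S form a directed subset of [m,·]
   (S is filtered) whose supremum there is [m, m] = m (m is the infimum of S).  Hence
   y ⊑ [m, s] for some s ∈ S, and then s ≤ right y = right x. *)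
Set Implicit Arguments.

Section IntervalPoset.
Variables (D : Type) (le : D -> D -> Prop) (left right : D -> D).
Hypothesis HI : interval_poset le left right.

Local Notation maxle := (maxle left right).

Lemma le_refl x : le x x.
Proof. destruct HI as [[Hrefl _] _]; apply Hrefl. Qed.

Lemma le_trans x y z : le x y -> le y z -> le x z.
Proof. destruct HI as [[_ [_ Htrans]] _]; apply Htrans. Qed.

Lemma le_antisym x y : le x y -> le y x -> x = y.
Proof. destruct HI as [[_ [Hanti _]] _]; apply Hanti. Qed.

Lemma max_left x : is_max le (left x).
Proof. destruct HI as [_ [Hmax _]]; apply Hmax. Qed.

Lemma max_right x : is_max le (right x).
Proof. destruct HI as [_ [Hmax _]]; apply Hmax. Qed.

Lemma le_left z : le z (left z).
Proof. destruct HI as [_ [_ [Hmeet _]]]; apply (Hmeet z); auto. Qed.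

Lemma le_right z : le z (right z).
Proof. destruct HI as [_ [_ [Hmeet _]]]; apply (Hmeet z); auto. Qed.

Lemma le_of_le_endpoints u z : le u (left z) -> le u (right z) -> le u z.
Proof.
  intros Hl Hr. destruct HI as [_ [_ [Hmeet _]]].
  apply (Hmeet z); [exact I |]. intros a [-> | ->]; assumption.
Qed.

Lemma endpoints_inj u z : left u = left z -> right u = right z -> u = z.
Proof.
  intros Hl Hr. apply le_antisym; apply le_of_le_endpoints.
  - rewrite <- Hl. apply le_left.
  - rewrite <- Hr. apply le_right.
  - rewrite Hl. apply le_left.
  - rewrite Hr. apply le_right.
Qed.

Lemma left_max p : is_max le p -> left p = p.
Proof. intro Hp. apply Hp, le_left. Qed.

Lemma right_max p : is_max le p -> right p = p.
Proof. intro Hp. apply Hp, le_right. Qed.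

Lemma compose_exists w v : right w = left v ->
  exists z, left z = left w /\ right z = right v.
Proof.
  intro Hwv. destruct HI as [_ [_ [_ [Hcomp _]]]].
  destruct (Hcomp w v Hwv) as [z [_ Hz]]. exists z; exact Hz.
Qed.

(* By [endpoints_inj], such a [z] is the meet [w ⊓ v] given by axiom (ii). *)
Lemma compose_le w v z : right w = left v ->
  left z = left w -> right z = right v -> le z w /\ le z v.
Proof.
  intros Hwv Hl Hr. destruct HI as [_ [_ [_ [Hcomp _]]]].
  destruct (Hcomp w v Hwv) as [z' [[_ [Hlb _]] [Hl' Hr']]].
  replace z with z' by (apply endpoints_inj; congruence).
  split; apply Hlb; auto.
Qed.

Lemma maxle_antisym a b : maxle a b -> maxle b a -> a = b.
Proof.
  intros [z1 [Hl1 Hr1]] [z2 [Hl2 Hr2]].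
  assert (Ha : is_max le a) by (rewrite <- Hl1; apply max_left).
  symmetry. apply Ha.
  destruct (@compose_le z1 z2 a) as [Haz1 _]; try congruence.
  - rewrite (left_max Ha); congruence.
  - rewrite (right_max Ha); congruence.
  - rewrite <- Hr1. exact (le_trans Haz1 (le_right z1)).
Qed.

Lemma maxle_right_of_le y p : is_max le p -> le y p -> maxle p (right y).
Proof.
  intros Hp Hyp. destruct HI as [_ [_ [_ [_ Hext]]]].
  destruct (Hext y p Hp Hyp) as [_ [z [_ Hz]]]. exists z; exact Hz.
Qed.

Lemma le_of_lsec_maxle z w : left z = left w -> maxle (right w) (right z) -> le z w.
Proof.
  intros Hl [v [Hvl Hvr]].
  apply (@compose_le w v z); congruence.
Qed.

Definition lsec_ending_in (m : D) (S : D -> Prop) : D -> Prop :=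
  fun z => left z = m /\ S (right z).

Lemma directed_lsec_ending_in m S :
  filtered maxle S -> (forall s, S s -> maxle m s) ->
  directed le (lsec_ending_in m S).
Proof.
  intros [[s0 Hs0] HF] Hlb. split.
  - destruct (Hlb s0 Hs0) as [z [Hzl Hzr]].
    exists z. split; [| rewrite Hzr]; assumption.
  - intros z1 z2 [Hl1 HS1] [Hl2 HS2].
    destruct (HF _ _ HS1 HS2) as [c [Hc [Hc1 Hc2]]].
    destruct (Hlb c Hc) as [w [Hwl Hwr]].
    exists w. split; [split; [| rewrite Hwr]; assumption |].
    split; apply le_of_lsec_maxle; congruence.
Qed.

Lemma lub_lsec_ending_in m S :
  is_glb_in maxle (is_max le) S m ->
  is_lub_in le (lsec left m) (lsec_ending_in m S) m.
Proof.
  intros [Hm [Hlb Hglb]]. split; [| split].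
  - apply left_max, Hm.
  - intros z [Hzl _]. rewrite <- Hzl. apply le_left.
  - intros u Hu Hub. unfold lsec in Hu.
    assert (Hru : right u = m).
    { apply maxle_antisym; [| exists u; split; [exact Hu | reflexivity]].
      apply Hglb; [apply max_right |].
      intros s Hs. destruct (Hlb s Hs) as [z [Hzl Hzr]].
      rewrite <- Hzr. apply maxle_right_of_le; [apply max_right |].
      apply le_trans with u; [apply Hub; split; [| rewrite Hzr]; assumption |].
      apply le_right. }
    replace u with m; [apply le_refl |].
    apply endpoints_inj; rewrite ?(left_max Hm), ?(right_max Hm); congruence.
Qed.

Lemma filtered_glb_maxle_right S m y :
  subset S (is_max le) -> filtered maxle S ->
  is_glb_in maxle (is_max le) S m ->
  left y = m -> way_below_in le (lsec left m) y m ->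
  exists s, S s /\ maxle s (right y).
Proof.
  intros HSmax HF Hglb Hyl Hwb.
  destruct (Hwb (lsec_ending_in m S) m) as [z [[Hzl Hz] Hyz]].
  - intros z [Hzl _]. exact Hzl.
  - apply directed_lsec_ending_in; [exact HF | apply Hglb].
  - apply lub_lsec_ending_in, Hglb.
  - apply le_refl.
  - exists (right z). split; [exact Hz |].
    apply maxle_right_of_le; [apply HSmax, Hz |].
    exact (le_trans Hyz (le_right z)).
Qed.

End IntervalPoset.

Theorem mainTheorem11 (D : Type) (le : D -> D -> Prop) (left right : D -> D)
  (HD : interval_domain le left right) (x : D) (Hx : uparrow_nonempty le x)
  (S : D -> Prop) (m : D) :
  subset S (is_max le) ->
  filtered (maxle left right) S ->
  is_glb_in (maxle left right) (is_max le) S m ->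
  maxle left right m (left x) ->
  exists s, S s /\ maxle left right s (right x).
Proof.
  intros HSmax HF Hglb [w [Hwl Hwr]].
  destruct HD as [HI [_ [_ [Hii _]]]].
  destruct (compose_exists HI w x Hwr) as [y [Hyl Hyr]].
  assert (Hyx : le y x) by (apply (compose_le HI w x y); assumption).
  assert (Hwb : way_below_in le (lsec left m) y m).
  { destruct (Hii x) as [_ [Hc _]].
    rewrite <- Hwl, <- Hyl. exact (Hc Hx y Hyr Hyx). }
  rewrite <- Hyr.
  apply (filtered_glb_maxle_right HI HSmax HF Hglb); congruence || assumption.
Qed.
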